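(* Let $\gamma\ge1$ and let $b_1,b_2\in\mathbb{C}$ with $\operatorname{Re}(b_j)\ge\gamma$ for $j=1,2$. For $\operatorname{Re}(z)\ge0$ let $\psi_j(z)=1/(z+b_j)$ and $\theta=\psi_1\circ\psi_2$. Then for all $z,w\in\mathbb{C}$ with $\operatorname{Re}(z)\ge0$ and $\operatorname{Re}(w)\ge0$, $$|\theta(z)-\theta(w)|\le(\gamma^2+1)^{-2}|z-w|.$$ *)

From mathcomp Require Import all_boot all_order all_algebra.
From mathcomp Require Import complex.
From mathcomp Require Import reals.
Set Implicit Arguments. Unset Strict Implicit. Unset Printing Implicit Defensive.
Import Order.TTheory GRing.Theory Num.Theory ComplexField.
Local Open Scope ring_scope.
Local Open Scope complex_scope.

Definition psi (R : rcfType) (b z : R[i]) : R[i] := (z + b)^-1.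

Definition theta (R : rcfType) (b1 b2 z : R[i]) : R[i] := psi b1 (psi b2 z).

(* Writing u = z + b2, one has theta z = u / (1 + b1 u), so
   theta z - theta w = (z - w) / ((1 + b1 u) (1 + b1 v)) with v = w + b2.
   If Re b = a >= 1 and Re u = c >= 1 then
   |1 + b u|^2 = (1 + a c)^2 + (a^2 - 1) Im u^2 + (c^2 - 1) Im b^2
                 + (Im b - Im u)^2 + (Im b Im u)^2 >= (1 + a c)^2,
   and both Re b1 and Re u are at least gamma, so each factor of the
   denominator has modulus at least gamma^2 + 1. *)

From mathcomp Require Import all_boot all_order all_algebra.
From mathcomp Require Import complex.
From mathcomp Require Import reals.
From mathcomp Require Import ring lra.
Set Implicit Arguments. Unset Strict Implicit. Unset Printing Implicit Defensive.

Import Order.TTheory GRing.Theory Num.Theory ComplexField.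
Local Open Scope ring_scope.
Local Open Scope complex_scope.

Section Moebius.
Variable R : rcfType.

Lemma theta_sub (b1 b2 z w : R[i]) :
  z + b2 != 0 -> w + b2 != 0 ->
  1 + b1 * (z + b2) != 0 -> 1 + b1 * (w + b2) != 0 ->
  theta b1 b2 z - theta b1 b2 w
    = (z - w) / ((1 + b1 * (z + b2)) * (1 + b1 * (w + b2))).
Proof.
rewrite /theta /psi => nzu nzv nzA nzB.
have -> : z - w = (z + b2) - (w + b2) by ring.
by field; rewrite nzu nzv nzA nzB.
Qed.

Lemma ler_normD1M_Re (b u : R[i]) :
  1 <= complex.Re b -> 1 <= complex.Re u ->
  (1 + complex.Re b * complex.Re u)%:C <= `|1 + b * u|.
Proof.
case: b => a t; case: u => c s /= a1 c1.
rewrite -ler_sqr ?nnegrE ?normr_ge0 ?ler0c //; last by nra.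
rewrite -add_Re2_Im2 -rmorphXn lecR /=.
have ha : 0 <= (a ^+ 2 - 1) * s ^+ 2 by rewrite mulr_ge0 ?sqr_ge0 ?subr_ge0; nra.
have hc : 0 <= (c ^+ 2 - 1) * t ^+ 2 by rewrite mulr_ge0 ?sqr_ge0 ?subr_ge0; nra.
have := sqr_ge0 (t - s); have := sqr_ge0 (t * s).
nra.
Qed.

Lemma ler_normD1M (g : R) (b u : R[i]) :
  1 <= g -> g <= complex.Re b -> g <= complex.Re u ->
  (g ^+ 2 + 1)%:C <= `|1 + b * u|.
Proof.
move=> g1 gb gu.
have [b1 u1] : 1 <= complex.Re b /\ 1 <= complex.Re u by split; lra.
apply: le_trans (ler_normD1M_Re b1 u1).
by rewrite lecR addrC lerD2l; nra.
Qed.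

End Moebius.

Lemma ler_norm_divM (F : numFieldType) (c x A B : F) :
  0 < c -> c <= `|A| -> c <= `|B| -> `|x / (A * B)| <= c ^- 2 * `|x|.
Proof.
move=> c0 cA cB; have A0 := lt_le_trans c0 cA; have B0 := lt_le_trans c0 cB.
rewrite normrM normfV normrM mulrC ler_wpM2r ?normr_ge0 //.
by rewrite lef_pV2 ?posrE ?exprn_gt0 ?mulr_gt0 // expr2 ler_pM // ltW.
Qed.

Theorem lemma5p1 (R : realType) (gamma : R) (b1 b2 : R[i]) :
  1 <= gamma -> gamma <= complex.Re b1 -> gamma <= complex.Re b2 ->
  forall z w : R[i], 0 <= complex.Re z -> 0 <= complex.Re w ->
    `|theta b1 b2 z - theta b1 b2 w|
      <= ((gamma ^+ 2 + 1) ^- 2)%:C * `|z - w|.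
Proof.
move=> g1 gb1 gb2 z w z0 w0.
have Re_shift (x : R[i]) : 0 <= complex.Re x -> gamma <= complex.Re (x + b2).
  by rewrite raddfD /=; lra.
have Re_ge_neq0 (x : R[i]) : gamma <= complex.Re x -> x != 0.
  by apply: contraTneq => ->; rewrite /= -ltNge; lra.
have c0 : (0 : R[i]) < (gamma ^+ 2 + 1)%:C by rewrite ltcR; nra.
have cA := ler_normD1M g1 gb1 (Re_shift _ z0).
have cB := ler_normD1M g1 gb1 (Re_shift _ w0).
have denom_neq0 (x : R[i]) : (gamma ^+ 2 + 1)%:C <= `|x| -> x != 0.
  by move=> /(lt_le_trans c0); rewrite normr_gt0.
rewrite theta_sub ?(denom_neq0 _ cA) ?(denom_neq0 _ cB) ?Re_ge_neq0 ?Re_shift //.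
rewrite rmorphV ?unitfE ?expf_neq0 ?lt0r_neq0 ?rmorphXn //; last by nra.
exact: ler_norm_divM.
Qed.
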